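(* Let $W(x_1,\dots,x_n)$ be an invertible, non-degenerate, quasi-homogeneous polynomial with $2\sum_jw_j=d$ and $W^\star$ its transpose. For every group $G$ with $J_W^2\in G\subseteq\operatorname{SL}_W$ we have $J_{W^\star}^2\in G^\star\subseteq\operatorname{SL}_{W^\star}$. Furthermore $(G^\star)^\star=G$, $\langle J_W^2\rangle^\star=\operatorname{SL}_{W^\star}$, $(\operatorname{SL}_W)^\star=\langle J_{W^\star}^2\rangle$, and if $H_1\subseteq H_2$ are groups with $J_W^2\in H_i\subseteq\operatorname{SL}_W$, then $H_2^\star\subseteq H_1^\star$.
   Context: Invertible: $W=\sum_i\prod_jx_j^{m_{i,j}}$ with invertible exponent matrix $M$, inverse $(m^{i,j})$; quasi-homogeneous of weights $w_j$ and degree $d$; non-degenerate: only critical point $0$. $W^\star=\sum_i\prod_jx_j^{m_{j,i}}$. $\operatorname{Aut}_W$ is the finite group of diagonal symmetries of $W$, $\operatorname{SL}_W=\operatorname{Aut}_W\cap\operatorname{SL}(n;\mathbb C)$, $J_W=(e^{2\pi iw_1/d},\dots,e^{2\pi iw_n/d})$ (similarly for $W^\star$); $\langle h\rangle$ is the group generated by $h$, and $G[J_W]$ the group generated by $G$ and $J_W$. With $\bar\rho_k=(e^{2\pi im^{k,1}},\dots,e^{2\pi im^{k,n}})\in\operatorname{Aut}_{W^\star}$, the Berglund--Hübsch dual of $H\subseteq\operatorname{Aut}_W$ is $H^{\mathrm T}=\{\prod_k\bar\rho_k^{r_k}:\prod_kx_k^{r_k}\text{ is }H\text{-invariant}\}$,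 i.e. the kernel of the Cartier dual $\operatorname{Aut}_{W^\star}=\widehat{\operatorname{Aut}_W}\to\widehat H$ of the inclusion. For $J_W^2\in G\subseteq\operatorname{SL}_W$ set $G^\star:=(G[J_W])^{\mathrm T}$; symmetrically for groups of $W^\star$, with $(W^\star)^\star=W$. *)

From HB Require Import structures.
From mathcomp Require Import all_boot all_order all_algebra all_field.
From mathcomp Require Import mpoly.
Set Implicit Arguments. Unset Strict Implicit. Unset Printing Implicit Defensive.
Import Order.TTheory GRing.Theory Num.Theory.
Local Open Scope ring_scope.

Section BH.
Variable n : nat.

(* diagonal matrices diag(g_1,...,g_n) are represented by their diagonal *)
Definition dvec := {ffun 'I_n -> algC}.
Definition dset := dvec -> Prop.

Definition one_v : dvec := [ffun => 1].
Definition mul_v (g h : dvec) : dvec := [ffun j => g j * h j].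
Definition inv_v (g : dvec) : dvec := [ffun j => (g j)^-1].
Definition exp_v (g : dvec) (k : nat) : dvec := [ffun j => g j ^+ k].

Definition subset_v (A B : dset) := forall x, A x -> B x.
Definition eqset_v (A B : dset) := forall x, A x <-> B x.

Definition is_group (G : dset) : Prop :=
  [/\ G one_v,
      (forall g h, G g -> G h -> G (mul_v g h)),
      (forall g, G g -> G (inv_v g)) &
      (forall g, G g -> forall j, g j != 0)].

Definition gen_by (S : dset) : dset :=
  fun x => forall K, is_group K -> subset_v S K -> K x.

(* e^{2 pi i q} for q rational: (b.-root (-1)) = e^{i pi / b} *)
Definition expi (q : rat) : algC :=
  ((absz (denq q)).-root (-1)) ^ (2 * numq q).

(* the invertible polynomial with exponent matrix M : W = sum_i prod_j x_j^{m_ij} *)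
Definition Wpoly (M : 'M[nat]_n) : {mpoly algC[n]} :=
  \sum_(i < n) \prod_(j < n) 'X_j ^+ (M i j).

Definition Mrat (M : 'M[nat]_n) : 'M[rat]_n := map_mx (fun m : nat => m%:R) M.

Definition invertible_exp (M : 'M[nat]_n) : Prop := Mrat M \in unitmx.

(* quasi-homogeneous of weights w and degree d: W(t^w x) = t^d W(x),
   i.e. each monomial has weighted degree d *)
Definition quasi_hom (M : 'M[nat]_n) (w : 'I_n -> nat) (d : nat) : Prop :=
  (0 < d)%N /\ (forall j, 0 < w j)%N /\
  forall i, (\sum_(j < n) M i j * w j)%N = d.

Definition non_degenerate (M : 'M[nat]_n) : Prop :=
  forall x : 'I_n -> algC,
    (forall j, (mderiv j (Wpoly M)).@[x] = 0) -> forall j, x j = 0.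

(* Aut_W : diagonal symmetries, W(g x) = W(x) *)
Definition Aut (M : 'M[nat]_n) : dset :=
  fun g => forall i, \prod_(j < n) g j ^+ (M i j) = 1.

Definition SL (M : 'M[nat]_n) : dset :=
  fun g => Aut M g /\ \prod_(j < n) g j = 1.

Definition J (w : 'I_n -> nat) (d : nat) : dvec :=
  [ffun j => expi ((w j)%:R / d%:R)].

Definition rho (M : 'M[nat]_n) (k : 'I_n) : dvec :=
  [ffun j => expi (invmx (Mrat M) k j)].

(* Berglund--Huebsch dual H^T (a group of W^*, exponent matrix M^T) *)
Definition BHdual (M : 'M[nat]_n) (H : dset) : dset :=
  fun g => exists r : 'I_n -> nat,
    (forall h, H h -> \prod_(k < n) h k ^+ r k = 1) /\
    g = [ffun j => \prod_(k < n) rho M k j ^+ r k].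

Definition star (M : 'M[nat]_n) (w : 'I_n -> nat) (d : nat) (G : dset) : dset :=
  BHdual M (gen_by (fun x => G x \/ x = J w d)).

Definition admissible (M : 'M[nat]_n) (w : 'I_n -> nat) (d : nat) (G : dset) :=
  [/\ is_group G, subset_v G (SL M) & G (exp_v (J w d) 2)].

End BH.

(** Write M for the exponent matrix. Every diagonal symmetry of W is
    e^(2 pi i M^-1 t) for some t in N^n, every diagonal symmetry of W^* is
    e^(2 pi i r M^-1), and prod_k g_k^(r_k) is a pairing between the two groups
    that is symmetric in t and r; the Berglund-Huebsch dual H^T is the
    annihilator of H for this pairing. Characters of the finite abelian group
    Aut_W separate points from subgroups, so (H^T)^T = H. Quasi-homogeneity
    gives J_W = e^(2 pi i M^-1 (1,...,1)) and J_W* = e^(2 pi i (1,...,1) M^-1),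
    so the annihilator of J_W consists of the symmetries of W^* of determinant 1,
    and det J_W = e^(2 pi i sum_j w_j / d) = -1 since 2 sum_j w_j = d. Hence
    J_W is not in SL_W, G[J_W] is the union of G and G J_W, and all the claims
    follow by duality.

    The only subtle point is analytic: e^(i pi / N) is available only as
    [N.-root (-1)], characterised as the N-th root of -1 of largest real part in
    the closed upper half-plane. A planar rotation argument shows that it is a
    primitive 2N-th root of unity, which makes e^(2 pi i q) a homomorphism from
    Q onto the roots of unity with kernel Z. *)

From mathcomp Require Import all_boot all_order all_algebra all_field.
From mathcomp Require Import all_fingroup all_character.
From mathcomp Require Import lra zify ring.
From Stdlib Require Import Classical ClassicalEpsilon FunctionalExtensionality.
Set Implicit Arguments. Unset Strict Implicit. Unset Printing Implicit Defensive.
Import Order.TTheory GRing.Theory Num.Theory.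
Local Open Scope ring_scope.

(** * Rotations of the unit circle and [N.-root (-1)] *)

Section RotationInequalities.
Variable R : realFieldType.
Implicit Types a b p q : R.

(* (a, b) and (p, q) are the coordinates of unit complex numbers u and v, so that
   u v = (a p - b q) + i (a q + b p). *)

Lemma rotation_upper_Re_le a b p q :
  a ^+ 2 + b ^+ 2 = 1 -> p ^+ 2 + q ^+ 2 = 1 -> 0 < q -> 0 < b ->
  0 <= a * q + b * p -> a * p - b * q <= p.
Proof.
move=> ab1 pq1 q_gt0 b_gt0 h.
have a_ge_1 : -1 <= a by nra.
have a_le1 : a <= 1 by nra.
have [p_ge0|p_lt0] := lerP 0 p; first nra.
have a_ge0 : 0 <= a by nra.
have k : - p * b ^+ 2 <= b * q * (1 + a) by nra.
have k2 : - p * (1 - a ^+ 2) <= b * q * (1 + a) by nra.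
nra.
Qed.

Lemma rotation_upper_Re_opp_gt a b p q :
  a ^+ 2 + b ^+ 2 = 1 -> p ^+ 2 + q ^+ 2 = 1 -> 0 < q -> 0 < b ->
  a * q + b * p < 0 -> p < b * q - a * p.
Proof.
move=> ab1 pq1 q_gt0 b_gt0 h.
have a_ge_1 : -1 <= a by nra.
have a_le1 : a <= 1 by nra.
have [p_le0|p_gt0] := lerP p 0; first nra.
have a_lt0 : a < 0 by nra.
have k : p * b ^+ 2 < b * q * (1 - a) by nra.
have k2 : p * (1 - a ^+ 2) < b * q * (1 - a) by nra.
nra.
Qed.

Lemma rotation_lower_Re_gt a b p q :
  a ^+ 2 + b ^+ 2 = 1 -> p ^+ 2 + q ^+ 2 = 1 -> 0 < q -> b < 0 ->
  0 < a * q + b * p -> p < a * p - b * q.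
Proof.
move=> ab1 pq1 q_gt0 b_lt0 h.
have a_ge_1 : -1 <= a by nra.
have a_le1 : a <= 1 by nra.
have [p_le0|p_gt0] := lerP p 0; first nra.
have a_gt0 : 0 < a by nra.
have k : p * b ^+ 2 < - b * q * (1 + a) by nra.
have k2 : p * (1 - a ^+ 2) < - b * q * (1 + a) by nra.
nra.
Qed.

End RotationInequalities.

(* [nra] needs a real field, so coordinates are transported from [algC] to [algR]. *)
Definition ReR (z : algC) : algR := in_algR (Creal_Re z).
Definition ImR (z : algC) : algR := in_algR (Creal_Im z).

Lemma algR_ltE (x y : algR) : (x < y) = (algRval x < algRval y).
Proof. by []. Qed.

Lemma algR_leE (x y : algR) : (x <= y) = (algRval x <= algRval y).
Proof. by []. Qed.

Lemma unit_ReR_ImR (z : algC) : `|z| = 1 -> ReR z ^+ 2 + ImR z ^+ 2 = 1.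
Proof.
move=> z1; apply: val_inj; rewrite [val 1]/=.
by rewrite rmorphD !rmorphXn /= -normC2_Re_Im z1 expr1n.
Qed.

Lemma ImR_mulE (u v : algC) : algRval (ReR u * ImR v + ImR u * ReR v) = 'Im (u * v).
Proof. by rewrite rmorphD !rmorphM /= [_ * 'Re v]mulrC -ImM. Qed.

Section UnitCircle.
Variables u v : algC.
Hypotheses (u1 : `|u| = 1) (v1 : `|v| = 1) (v_Im_gt0 : 0 < 'Im v).

Lemma Re_mul_upper_le : 0 < 'Im u -> 0 <= 'Im (u * v) -> 'Re (u * v) <= 'Re v.
Proof.
move=> u_Im uv_Im.
have := rotation_upper_Re_le (unit_ReR_ImR u1) (unit_ReR_ImR v1) v_Im_gt0 u_Im.
rewrite algR_leE ImR_mulE ReM => /(_ uv_Im).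
by rewrite algR_leE !rmorphB !rmorphM.
Qed.

Lemma Re_opp_mul_upper_gt : 0 < 'Im u -> 'Im (u * v) < 0 -> 'Re v < 'Re (- (u * v)).
Proof.
move=> u_Im uv_Im.
have := rotation_upper_Re_opp_gt (unit_ReR_ImR u1) (unit_ReR_ImR v1) v_Im_gt0 u_Im.
rewrite algR_ltE ImR_mulE raddfN /= ReM => /(_ uv_Im).
by rewrite algR_ltE !rmorphB !rmorphM /= opprB.
Qed.

Lemma Re_mul_lower_gt : 'Im u < 0 -> 0 < 'Im (u * v) -> 'Re v < 'Re (u * v).
Proof.
move=> u_Im uv_Im.
have := rotation_lower_Re_gt (unit_ReR_ImR u1) (unit_ReR_ImR v1) v_Im_gt0 u_Im.
rewrite algR_ltE ImR_mulE ReM => /(_ uv_Im).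
by rewrite algR_ltE !rmorphB !rmorphM.
Qed.

End UnitCircle.

Lemma Im1 : 'Im (1 : algC) = 0.
Proof. by apply/Creal_ImP; rewrite rpred1. Qed.

Lemma Re1 : 'Re (1 : algC) = 1.
Proof. by apply/Creal_ReP; rewrite rpred1. Qed.

Lemma ImN1 : 'Im (-1 : algC) = 0.
Proof. by apply/Creal_ImP; rewrite rpredN rpred1. Qed.

Lemma ImN (z : algC) : 'Im (- z) = - 'Im z.
Proof. exact: raddfN. Qed.

Lemma ReN (z : algC) : 'Re (- z) = - 'Re z.
Proof. exact: raddfN. Qed.

Lemma oppC1_neq1 : (-1 : algC) != 1.
Proof. by rewrite eq_sym -addr_eq0 (_ : 1 + 1 = 2%:R) // pnatr_eq0. Qed.

Lemma normCX1 (z : algC) k : `|z| = 1 -> `|z ^+ k| = 1.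
Proof. by move=> z1; rewrite normrX z1 expr1n. Qed.

Lemma norm_unity_root (z : algC) m : (0 < m)%N -> z ^+ m = 1 -> `|z| = 1.
Proof.
move=> m_gt0 zm; apply/eqP; rewrite -(pexpr_eq1 m_gt0) ?normr_ge0 //.
by rewrite -normrX zm normr1.
Qed.

Lemma unit_Im0 (z : algC) : `|z| = 1 -> 'Im z = 0 -> z = 1 \/ z = -1.
Proof.
move=> z1 /Creal_ImP z_real.
have : z ^+ 2 == 1 by rewrite -real_normK // z1 expr1n.
by rewrite sqrf_eq1 => /orP[/eqP|/eqP]; [left|right].
Qed.

Lemma unit_upper_Re_inj (u v : algC) : `|u| = 1 -> `|v| = 1 ->
  0 <= 'Im u -> 0 <= 'Im v -> 'Re u = 'Re v -> u = v.
Proof.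
move=> u1 v1 u_Im v_Im eq_Re.
have eq_Im2 : 'Im u ^+ 2 = 'Im v ^+ 2.
  have := normC2_Re_Im u; have := normC2_Re_Im v; rewrite u1 v1 eq_Re => ->.
  by move/addrI.
have eq_Im : 'Im u = 'Im v by apply/eqP; rewrite -(eqrXn2 (n:=2)) // eq_Im2.
by rewrite [u]Crect [v]Crect eq_Re eq_Im.
Qed.

Lemma unit_Im_inv (z : algC) : `|z| = 1 -> 'Im z^-1 = - 'Im z.
Proof. by move=> z1; rewrite invC_norm z1 expr1n invr1 mul1r Im_conj. Qed.

Lemma unit_Re_gtN1 (z : algC) : `|z| = 1 -> z != -1 -> -1 < 'Re z.
Proof.
move=> z1 z_neqN1.
have ReIm1 := unit_ReR_ImR z1.
have : -1 <= ReR z by nra.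
rewrite le_eqVlt => /orP[/eqP ReN1|]; last by rewrite algR_ltE rmorphN rmorph1.
have Im0 : ImR z = 0 by nra.
case/negP: z_neqN1; apply/eqP; rewrite [z]Crect.
have -> : 'Re z = -1 by rewrite -[RHS]/(algRval (-1)) ReN1.
have -> : 'Im z = 0 by rewrite -[RHS]/(algRval 0) -Im0.
by rewrite mulr0 addr0.
Qed.

Lemma exists_max_Re (s : seq algC) : s != [::] ->
  exists2 x, x \in s & forall y, y \in s -> 'Re y <= 'Re x.
Proof.
elim: s => // a [|b s] IH _.
  by exists a; rewrite ?mem_seq1 // => y; rewrite mem_seq1 => /eqP->.
have [x xs xmax] := IH isT.
have /orP[ax|xa] := real_leVge (Creal_Re a) (Creal_Re x).
  exists x; first by rewrite inE xs orbT.
  by move=> y; rewrite inE => /orP[/eqP->//|/xmax].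
exists a; first by rewrite mem_head.
by move=> y; rewrite inE => /orP[/eqP->//|/xmax yx]; exact: le_trans yx xa.
Qed.

Lemma real_neq0_ngt0 (x : algC) : x \is Num.real -> x != 0 -> ~ (0 < x) -> x < 0.
Proof.
by move=> x_real; rewrite real_neqr_lt ?rpred0 // => /orP[//|x_gt0] /(_ x_gt0).
Qed.

Lemma exists_sign_change (s : nat -> algC) K : (0 < K)%N -> (forall j, s j \is Num.real) ->
  (forall j, s j != 0) -> (forall j, s (j + K)%N = - s j) ->
  exists2 J, (0 < J)%N & (s J.-1 < 0) && (0 < s J).
Proof.
move=> K_gt0 s_real s_neq0 sK.
have s_lt0 j : ~ (0 < s j) -> s j < 0 by apply: real_neq0_ngt0.
have [m s_m] : exists m, s m < 0.
  have [s0_gt0|/negP/s_lt0 s0_lt0] := boolP (0 < s 0); last by exists 0%N.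
  by exists K; rewrite -(add0n K) sK oppr_lt0.
have exJ : exists j, (m < j)%N && (0 < s j).
  by exists (m + K)%N; rewrite sK oppr_gt0 s_m andbT; lia.
case: (ex_minnP exJ) => J /andP[mJ sJ_gt0] J_min.
exists J; first lia.
rewrite sJ_gt0 andbT; have [<-//|m_neq] := eqVneq m J.-1.
apply: s_lt0 => sJ1_gt0; have := J_min J.-1; rewrite sJ1_gt0 andbT.
have -> : (m < J.-1)%N by rewrite ltn_neqAle m_neq /=; lia.
by move/(_ isT); lia.
Qed.

Lemma exprN_even (x : algC) N : (- x) ^+ (2 * N) = x ^+ (2 * N).
Proof. by rewrite exprNn exprM sqrrN !expr1n mul1r. Qed.

Lemma expr_halfturn (z : algC) K : z ^+ K = -1 -> z ^+ (2 * K) = 1.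
Proof. by move=> zK; rewrite mulnC exprM zK sqrrN expr1n. Qed.

Notation rootN1 N := (N.-root (-1 : algC)).

Lemma rootN1K N : (0 < N)%N -> rootN1 N ^+ N = -1.
Proof. by move=> N_gt0; rewrite rootCK. Qed.

Lemma norm_rootN1 N : (0 < N)%N -> `|rootN1 N| = 1.
Proof.
move=> N_gt0; apply: (@norm_unity_root _ (2 * N)); first lia.
exact/expr_halfturn/rootN1K.
Qed.

Lemma rootN1_neq1 N : (0 < N)%N -> rootN1 N != 1.
Proof.
move=> N_gt0; apply/eqP => eq1; have := rootN1K N_gt0.
by rewrite eq1 expr1n => /eqP; rewrite eq_sym (negbTE oppC1_neq1).
Qed.

Lemma rootN1_neq0 N : (0 < N)%N -> rootN1 N != 0.
Proof. by move=> N_gt0; rewrite -normr_eq0 norm_rootN1 // oner_neq0. Qed.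

Lemma prim_root_halfturn (z : algC) K : (0 < K)%N -> z ^+ K = -1 ->
  (forall k, (0 < k < K)%N -> 0 < 'Im (z ^+ k)) -> (2 * K).-primitive_root z.
Proof.
move=> K_gt0 zK upper.
have z_neq1 j : (0 < j < 2 * K)%N -> z ^+ j != 1.
  move=> /andP[j_gt0 j_lt]; apply/eqP => zj.
  have [j_ltK|j_gtK|jK] := ltngtP j K.
  - by have := upper j; rewrite j_gt0 j_ltK zj Im1 ltxx => /(_ isT).
  - have jK : (0 < j - K < K)%N by apply/andP; split; lia.
    have zjK : z ^+ (j - K) = -1.
      move: zj; rewrite -(subnKC (ltnW j_gtK)) exprD zK mulN1r addKn.
      by move/eqP; rewrite eqr_oppLR => /eqP.
    by have := upper _ jK; rewrite zjK ImN1 ltxx.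
  - by move: zj; rewrite jK zK => /eqP; rewrite (negbTE oppC1_neq1).
have K2_gt0 : (0 < 2 * K)%N by lia.
have [m prim_m m_dvd] := prim_order_exists K2_gt0 (expr_halfturn zK).
have m_gt0 : (0 < m)%N := prim_order_gt0 prim_m.
have m_le : (m <= 2 * K)%N by apply: dvdn_leq => //; lia.
have [m_lt|<-//] : (m < 2 * K)%N \/ m = (2 * K)%N by lia.
by have := z_neq1 m; rewrite m_gt0 m_lt prim_expr_order // eqxx => /(_ isT).
Qed.

(* [eta] is a 2N-th root of unity other than 1, of largest real part in the closed
   upper half-plane; it turns out to be [N.-root (-1)], a primitive root. *)
Section MaxUpperRoot.
Variables (N : nat) (eps eta : algC).
Hypotheses (N_gt1 : (1 < N)%N) (eps_prim : (2 * N).-primitive_root eps).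
Hypotheses (eta2N : eta ^+ (2 * N) = 1) (eta_neq1 : eta != 1) (eta_Im_ge0 : 0 <= 'Im eta).
Hypothesis eta_max :
  forall z, z ^+ (2 * N) = 1 -> z != 1 -> 0 <= 'Im z -> 'Re z <= 'Re eta.

Let N2_gt0 : (0 < 2 * N)%N. Proof. lia. Qed.
Let eta1 : `|eta| = 1. Proof. exact: norm_unity_root N2_gt0 eta2N. Qed.
Let eps2N : eps ^+ (2 * N) = 1. Proof. exact: prim_expr_order. Qed.
Let eps1 : `|eps| = 1. Proof. exact: norm_unity_root N2_gt0 eps2N. Qed.

Lemma maxroot_Im_gt0 : 0 < 'Im eta.
Proof.
rewrite lt_def eta_Im_ge0 andbT; apply/eqP => Im0.
have [eta_eq1|etaN1] := unit_Im0 eta1 Im0; first by move: eta_neq1; rewrite eta_eq1 eqxx.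
have eps_neq1 : eps != 1.
  apply/eqP => e1; have := prim_order_dvd eps_prim 1; rewrite expr1 e1 eqxx.
  by move/dvdn_leq => /(_ isT); lia.
have eps_neqN1 : eps != -1.
  apply/eqP => e1; have := prim_order_dvd eps_prim 2; rewrite e1 sqrrN expr1n eqxx.
  by move/dvdn_leq => /(_ isT); lia.
have [z [z2N z_neq1 z_neqN1 z_Im z1]] :
    exists z : algC, [/\ z ^+ (2 * N) = 1, z != 1, z != -1, 0 <= 'Im z & `|z| = 1].
  have /orP[eps_Im|eps_Im] := real_leVge (Creal_Im eps) (@real0 algC); last by exists eps.
  exists eps^-1; split.
  - by rewrite exprVn eps2N invr1.
  - by rewrite invr_eq1.
  - by apply: contra eps_neqN1 => /eqP e; rewrite -[eps]invrK e invrN invr1.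
  - by rewrite unit_Im_inv // oppr_ge0.
  - by rewrite normrV ?eps1 ?invr1 // unitfE -normr_eq0 eps1 oner_neq0.
have := eta_max z2N z_neq1 z_Im; rewrite etaN1 ReN Re1.
by rewrite (lt_geF (unit_Re_gtN1 z1 z_neqN1)).
Qed.

Let eta_Im_gt0 := maxroot_Im_gt0.

Lemma maxroot_halfturn K : (0 < K)%N -> 'Im (eta ^+ K) <= 0 ->
  (forall j, (0 < j < K)%N -> 0 < 'Im (eta ^+ j)) -> eta ^+ K = -1.
Proof.
move=> K_gt0 etaK_Im upper.
have K_gt1 : (1 < K)%N.
  case: K K_gt0 etaK_Im {upper} => [|[|K]] // _.
  by rewrite expr1 (lt_geF eta_Im_gt0).
have etaK : eta ^+ K = eta ^+ K.-1 * eta by rewrite -exprSr prednK.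
have etaK1_Im : 0 < 'Im (eta ^+ K.-1) by apply: upper; lia.
have etaK1_1 : `|eta ^+ K.-1| = 1 by exact: normCX1.
have Im0 : 'Im (eta ^+ K) = 0.
  apply/eqP; apply: contraT => Im_neq0.
  have Im_lt0 : 'Im (eta ^+ K) < 0 by rewrite lt_def eq_sym Im_neq0 etaK_Im.
  (* otherwise [- eta ^+ K] would be a candidate with larger real part *)
  rewrite etaK in Im_lt0.
  have Re_lt := Re_opp_mul_upper_gt etaK1_1 eta1 eta_Im_gt0 etaK1_Im Im_lt0.
  suff : 'Re (- (eta ^+ K.-1 * eta)) <= 'Re eta by rewrite (lt_geF Re_lt).
  apply: eta_max.
  - by rewrite exprN_even -etaK exprAC eta2N expr1n.
  - apply/eqP => /(congr1 (fun x => 'Im x)); rewrite /= ImN Im1 => /eqP.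
    by rewrite oppr_eq0 (lt_eqF Im_lt0).
  - by rewrite ImN oppr_ge0 ltW.
have [etaK1|//] := unit_Im0 (normCX1 K eta1) Im0.
have eta_inv : eta ^+ K.-1 = eta^-1.
  have eta_neq0 : eta != 0 by rewrite -normr_eq0 eta1 oner_neq0.
  by apply: (mulIf eta_neq0); rewrite -etaK etaK1 mulVf.
move: etaK1_Im; rewrite eta_inv unit_Im_inv // oppr_gt0 => Im_lt0.
by have := lt_trans Im_lt0 eta_Im_gt0; rewrite ltxx.
Qed.

Lemma maxroot_no_short_halfturn K : (0 < K < N)%N -> eta ^+ K = -1 -> False.
Proof.
move=> /andP[K_gt0 K_lt] etaK.
pose sj j := 'Im (eta ^+ j * eps).
have sj_neq0 j : sj j != 0.
  apply/eqP => sj0.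
  have u1 : `|eta ^+ j * eps| = 1 by rewrite normrM normCX1 // eps1 mulr1.
  have : (eta ^+ j * eps) ^+ (2 * K) = 1.
    by have [->|->] := unit_Im0 u1 sj0; rewrite ?expr1n // exprM sqrrN !expr1n.
  rewrite exprMn -exprM mulnC exprM (expr_halfturn etaK) expr1n mul1r => /eqP.
  by rewrite -(prim_order_dvd eps_prim) => /dvdn_leq; lia.
have sjK j : sj (j + K)%N = - sj j by rewrite /sj exprD etaK mulrN1 mulNr ImN.
(* at a sign change of [sj], rotating by [eta] produces a candidate with larger
   real part than [eta] *)
have [J J_gt0 /andP[sjJ1_lt0 sjJ_gt0]] :=
  exists_sign_change K_gt0 (fun j => Creal_Im _) sj_neq0 sjK.
have u1 : `|eta ^+ J.-1 * eps| = 1 by rewrite normrM normCX1 // eps1 mulr1.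
have rot : eta ^+ J.-1 * eps * eta = eta ^+ J * eps.
  by rewrite -mulrA [eps * _]mulrC mulrA -exprSr prednK.
have := Re_mul_lower_gt u1 eta1 eta_Im_gt0 sjJ1_lt0; rewrite rot => /(_ sjJ_gt0) Re_lt.
suff : 'Re (eta ^+ J * eps) <= 'Re eta by rewrite (lt_geF Re_lt).
apply: eta_max.
- by rewrite exprMn eps2N mulr1 exprAC eta2N expr1n.
- by apply/eqP => e; move: sjJ_gt0; rewrite /sj e Im1 ltxx.
- exact: ltW.
Qed.

Lemma maxroot_halfturn_order K : (0 < K)%N -> eta ^+ K = -1 ->
  (forall j, (0 < j < K)%N -> 0 < 'Im (eta ^+ j)) -> K = N.
Proof.
move=> K_gt0 etaK upper.
have eta_prim := prim_root_halfturn K_gt0 etaK upper.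
have K_le : (K <= N)%N.
  have := prim_order_dvd eta_prim (2 * N); rewrite eta2N eqxx.
  by move/dvdn_leq => /(_ N2_gt0); lia.
have [K_lt|//] : (K < N)%N \/ K = N by lia.
by case: (maxroot_no_short_halfturn (K := K)) => //; rewrite K_gt0.
Qed.

Lemma maxroot_spec : eta ^+ N = -1 /\ forall k, (0 < k < N)%N -> 0 < 'Im (eta ^+ k).
Proof.
have exK : exists K, (0 < K)%N && ('Im (eta ^+ K) <= 0).
  by exists (2 * N)%N; rewrite N2_gt0 eta2N Im1 lexx.
case: (ex_minnP exK) => K /andP[K_gt0 etaK_Im] K_min.
have upper j : (0 < j < K)%N -> 0 < 'Im (eta ^+ j).
  move=> /andP[j_gt0 j_lt]; rewrite real_ltNge ?Creal_Im ?real0 //.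
  by apply/negP => j_Im; have := K_min j; rewrite j_gt0 j_Im => /(_ isT); lia.
have etaK := maxroot_halfturn K_gt0 etaK_Im upper.
by rewrite -(maxroot_halfturn_order K_gt0 etaK upper).
Qed.

Lemma maxroot_rootN1 : eta = rootN1 N.
Proof.
have N_gt0 : (0 < N)%N by lia.
apply: unit_upper_Re_inj => //; first exact: norm_rootN1.
  exact: Im_rootC_ge0.
apply: le_anti; rewrite rootC_Re_max //; last exact: maxroot_spec.1.
by rewrite eta_max // ?Im_rootC_ge0 ?rootN1_neq1 // expr_halfturn // rootN1K.
Qed.

End MaxUpperRoot.

Lemma rootN1_upper_powers N k : (0 < k < N)%N -> 0 < 'Im (rootN1 N ^+ k).
Proof.
move=> /andP[k_gt0 k_lt].
have N_gt1 : (1 < N)%N by lia.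
have N2_gt0 : (0 < 2 * N)%N by lia.
have [eps eps_prim] := C_prim_root_exists N2_gt0.
pose P (z : algC) := [&& z ^+ (2 * N) == 1, z != 1 & 0 <= 'Im z].
pose s := [seq z <- [seq eps ^+ i | i <- iota 0 (2 * N)] | P z].
have mem_s z : P z -> z \in s.
  move=> Pz; rewrite mem_filter Pz /=.
  have [i ->] := prim_rootP eps_prim (eqP (andP Pz).1).
  by apply: map_f; rewrite mem_iota /= add0n ltn_ord.
have N_gt0 : (0 < N)%N by lia.
have P_rootN1 : P (rootN1 N).
  by rewrite /P expr_halfturn ?rootN1K // eqxx rootN1_neq1 // Im_rootC_ge0.
have s_neq0 : s != [::] by apply/eqP => s0; have := mem_s _ P_rootN1; rewrite s0.
have [eta eta_s eta_max] := exists_max_Re s_neq0.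
have /and3P[/eqP eta2N eta_neq1 eta_Im] : P eta by move: eta_s; rewrite mem_filter => /andP[].
have eta_max' z : z ^+ (2 * N) = 1 -> z != 1 -> 0 <= 'Im z -> 'Re z <= 'Re eta.
  by move=> z2N z_neq1 z_Im; apply/eta_max/mem_s; rewrite /P z2N eqxx z_neq1.
rewrite -(maxroot_rootN1 N_gt1 eps_prim eta2N eta_neq1 eta_Im eta_max').
by apply: (maxroot_spec N_gt1 eps_prim eta2N eta_neq1 eta_Im eta_max').2; rewrite k_gt0.
Qed.

Lemma rootN1_prim N : (0 < N)%N -> (2 * N).-primitive_root (rootN1 N).
Proof.
move=> N_gt0; apply: prim_root_halfturn => //; first exact: rootN1K.
exact: rootN1_upper_powers.
Qed.

Lemma Re_upper_powers_le (y : algC) b : `|y| = 1 -> y ^+ b = -1 ->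
  (forall k, (0 < k < b)%N -> 0 < 'Im (y ^+ k)) ->
  forall j, (0 < j <= b)%N -> 'Re (y ^+ j) <= 'Re y.
Proof.
move=> y1 yb upper; elim=> // [[|j]] IH /andP[_ j_le]; first by rewrite expr1.
rewrite exprSr; apply: Re_mul_upper_le => //.
- exact: normCX1.
- by rewrite -(expr1 y); apply: upper; apply/andP; split; lia.
- by apply: upper; apply/andP; split; lia.
- rewrite -exprSr; have [j_lt|->] : (j.+2 < b)%N \/ j.+2 = b by lia.
    by apply: ltW; apply: upper; rewrite j_lt.
  by rewrite yb ImN1.
Qed.

Lemma rootN1_pow b c : (0 < b)%N -> (0 < c)%N -> rootN1 (b * c) ^+ c = rootN1 b.
Proof.
move=> b_gt0 c_gt0; set y := rootN1 (b * c) ^+ c.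
have bc_gt0 : (0 < b * c)%N by rewrite muln_gt0 b_gt0.
have yb : y ^+ b = -1 by rewrite /y -exprM (mulnC c b) rootN1K.
have [b1|b_gt1] : b = 1%N \/ (1 < b)%N by lia.
  by rewrite b1 root1C -(expr1 y) -{1}b1 yb.
have y1 : `|y| = 1 by apply: normCX1; exact: norm_rootN1.
have upper k : (0 < k < b)%N -> 0 < 'Im (y ^+ k).
  move=> /andP[k_gt0 k_lt]; rewrite /y -exprM; apply: rootN1_upper_powers.
  by apply/andP; split; nia.
have [i rootN1_yi] := prim_rootP (prim_root_halfturn b_gt0 yb upper)
  (expr_halfturn (rootN1K b_gt0)).
have i_gt0 : (0 < i)%N.
  rewrite lt0n; apply/negP => /eqP i0; move: rootN1_yi; rewrite i0 expr0 => /eqP.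
  by rewrite (negbTE (rootN1_neq1 b_gt0)).
have i_le : (i <= b)%N.
  rewrite leqNgt; apply/negP => b_lt_i.
  have ib : (0 < i - b < b)%N by have := ltn_ord i; move=> ?; apply/andP; split; lia.
  have := Im_rootC_ge0 (-1 : algC) b_gt1.
  rewrite rootN1_yi -(subnKC (ltnW b_lt_i)) exprD yb mulN1r ImN oppr_ge0.
  by rewrite (lt_geF (upper _ ib)).
have y_Im : 0 <= 'Im y by apply: ltW; rewrite -(expr1 y); apply: upper; rewrite b_gt1.
apply: unit_upper_Re_inj => //; [exact: norm_rootN1 | exact: Im_rootC_ge0 |].
apply: le_anti; rewrite rootC_Re_max //= rootN1_yi.
by apply: (Re_upper_powers_le y1 yb upper); rewrite i_gt0.
Qed.

(** * The exponential [expi q] = e^(2 pi i q) *)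

Lemma denq_absz q : (`|denq q|%N)%:Z = denq q.
Proof. by rewrite gtz0_abs ?denq_gt0. Qed.

Lemma absz_denq_gt0 q : (0 < `|denq q|)%N.
Proof. by rewrite absz_gt0 denq_neq0. Qed.

Lemma expi_divE (x : int) (m : nat) : (0 < m)%N -> expi (x%:~R / m%:R) = rootN1 m ^ (2 * x).
Proof.
move=> m_gt0; set q := x%:~R / m%:R; rewrite /expi.
set D := `|denq q|%N.
have D_gt0 : (0 < D)%N := absz_denq_gt0 q.
have cross : numq q * m%:Z = x * D%:Z.
  apply/eqP; rewrite -(eqr_int rat) !intrM denq_absz numqE /q.
  have m_neq0 : (m%:R : rat) != 0 by rewrite pnatr_eq0 -lt0n.
  by rewrite mulrAC -[(m%:Z)%:~R]/(m%:R : rat) divfK.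
(* both sides are powers of [rootN1 (m * D)] *)
rewrite -(rootN1_pow m_gt0 D_gt0) -(rootN1_pow D_gt0 m_gt0) (mulnC D m).
rewrite !exprnP !exprz_exp; congr (_ ^ _); rewrite mulrCA [RHS]mulrCA; congr (_ * _).
by rewrite [LHS]mulrC cross mulrC.
Qed.

Lemma expi_scaled (q : rat) (x : int) (m : nat) : (0 < m)%N -> q * m%:R = x%:~R ->
  expi q = rootN1 m ^ (2 * x).
Proof.
move=> m_gt0 qm; rewrite -expi_divE //; congr expi.
by rewrite -qm mulfK // pnatr_eq0 -lt0n.
Qed.

Lemma mul_denq_natr q k : q * (`|denq q| * k)%:R = (numq q * k%:Z)%:~R.
Proof. by rewrite natrM mulrA intrM numqE -denq_absz. Qed.

Lemma expi_int (z : int) : expi z%:~R = 1.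
Proof.
rewrite (@expi_scaled _ z 1) // ?mulr1 //.
by rewrite root1C -exprz_exp -exprnP sqrrN expr1n exp1rz.
Qed.

Lemma expi0 : expi 0 = 1.
Proof. by rewrite -(expi_int 0). Qed.

Lemma expi_neq0 q : expi q != 0.
Proof. by rewrite /expi expfz_neq0 // rootN1_neq0 // absz_denq_gt0. Qed.

Lemma expiD a b : expi (a + b) = expi a * expi b.
Proof.
set da := `|denq a|%N; set db := `|denq b|%N.
have dadb_gt0 : (0 < da * db)%N by rewrite muln_gt0 !absz_denq_gt0.
have a_scaled := mul_denq_natr a db.
have b_scaled : b * (da * db)%:R = (numq b * da%:Z)%:~R by rewrite mulnC mul_denq_natr.
rewrite (expi_scaled dadb_gt0 a_scaled) (expi_scaled dadb_gt0 b_scaled).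
rewrite (@expi_scaled _ (numq a * db%:Z + numq b * da%:Z) _ dadb_gt0).
  by rewrite mulrDr expfzDr // rootN1_neq0.
by rewrite mulrDl a_scaled b_scaled intrD.
Qed.

Lemma expiMn q k : expi q ^+ k = expi (q *+ k).
Proof.
elim: k => [|k IH]; first by rewrite expr0 mulr0n expi0.
by rewrite exprS IH mulrS expiD.
Qed.

Lemma expi_sum (I : Type) (s : seq I) (F : I -> rat) :
  expi (\sum_(i <- s) F i) = \prod_(i <- s) expi (F i).
Proof. exact: (big_morph expi expiD expi0). Qed.

Lemma prim_root_exprz_eq1 n (z : algC) (e : int) :
  n.-primitive_root z -> z ^ e = 1 -> (n%:Z %| e)%Z.
Proof.
move=> z_prim; case: e => k.
  by rewrite -exprnP => /eqP; rewrite -(prim_order_dvd z_prim) dvdzE.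
rewrite NegzE -exprnN => /eqP; rewrite invr_eq1 => /eqP.
by move/eqP; rewrite -(prim_order_dvd z_prim) dvdzE abszN.
Qed.

Lemma expi_eq1 q : expi q = 1 -> q \is a Num.int.
Proof.
set D := `|denq q|%N; have D_gt0 : (0 < D)%N := absz_denq_gt0 q.
move=> /(prim_root_exprz_eq1 (rootN1_prim D_gt0)).
rewrite PoszM dvdz_mul2l // => /divzK num_div.
apply/intrP; exists (numq q %/ D%:Z)%Z.
apply: (mulIf (_ : (D%:Z)%:~R != 0 :> rat)); first by rewrite intr_eq0 -lt0n D_gt0.
by rewrite -intrM num_div denq_absz numqE.
Qed.

Lemma expi_onto_unity_root (z : algC) N : (0 < N)%N -> z ^+ N = 1 ->
  exists k : nat, z = expi (k%:R / N%:R).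
Proof.
move=> N_gt0 zN.
have z2N : z ^+ (2 * N) = 1 by rewrite mulnC exprM zN expr1n.
have [[i /= _] zi] := prim_rootP (rootN1_prim N_gt0) z2N.
have : (2 * N %| i * N)%N.
  by rewrite (prim_order_dvd (rootN1_prim N_gt0)) exprM -zi zN.
rewrite dvdn_pmul2r // => /divnK i_even.
exists (i %/ 2)%N.
rewrite -[(i %/ 2)%:R]/(((i %/ 2)%N%:Z)%:~R : rat) expi_divE //.
by rewrite zi -PoszM -exprnP mulnC i_even.
Qed.

(** * Diagonal symmetries and the Berglund-Huebsch dual *)

Section DiagonalVectors.
Variable n : nat.
Implicit Types (g h x y : dvec n) (q : 'I_n -> rat) (r t : 'I_n -> nat).

Definition expv q : dvec n := [ffun j => expi (q j)].
Definition monom g r : algC := \prod_k g k ^+ r k.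
Definition torus g : Prop := forall j, g j != 0.

Lemma monom_expv q r : monom (expv q) r = expi (\sum_k (r k)%:R * q k).
Proof. by rewrite /monom expi_sum; apply: eq_bigr => k _; rewrite ffunE expiMn mulr_natl. Qed.

Lemma expv_mul q q' : mul_v (expv q) (expv q') = expv (fun j => q j + q' j).
Proof. by apply/ffunP => j; rewrite !ffunE expiD. Qed.

Lemma expv_exp q k : exp_v (expv q) k = expv (fun j => q j *+ k).
Proof. by apply/ffunP => j; rewrite !ffunE expiMn. Qed.

Lemma expv0 : expv (fun _ => 0) = one_v n.
Proof. by apply/ffunP => j; rewrite !ffunE expi0. Qed.

Lemma expv_torus q : torus (expv q).
Proof. by move=> j; rewrite ffunE expi_neq0. Qed.

Lemma expv_eq q q' : (forall j, q j - q' j \is a Num.int) -> expv q = expv q'.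
Proof.
move=> q_int; apply/ffunP => j; rewrite !ffunE.
have /intrP[z qz] := q_int j.
by rewrite -(subrK (q' j) (q j)) expiD qz expi_int mul1r.
Qed.

Lemma monom_mul x y r : monom (mul_v x y) r = monom x r * monom y r.
Proof. by rewrite /monom -big_split; apply: eq_bigr => k _; rewrite ffunE exprMn. Qed.

Lemma monom_inv x r : monom (inv_v x) r = (monom x r)^-1.
Proof. by rewrite /monom -prodfV; apply: eq_bigr => k _; rewrite ffunE exprVn. Qed.

Lemma monom_exp x r m : monom (exp_v x m) r = monom x r ^+ m.
Proof. by rewrite /monom -prodrXl; apply: eq_bigr => k _; rewrite ffunE exprAC. Qed.

Lemma monom_one r : monom (one_v n) r = 1.
Proof. by rewrite /monom big1 // => k _; rewrite ffunE expr1n. Qed.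

Lemma monomD x r r' : monom x (fun k => (r k + r' k)%N) = monom x r * monom x r'.
Proof. by rewrite /monom -big_split; apply: eq_bigr => k _; rewrite exprD. Qed.

Lemma monomM x r m : monom x (fun k => (r k * m)%N) = monom x r ^+ m.
Proof. by rewrite /monom -prodrXl; apply: eq_bigr => k _; rewrite exprM. Qed.

Lemma torus_group : is_group torus.
Proof.
split.
- by move=> j; rewrite ffunE oner_neq0.
- by move=> g h tg th j; rewrite ffunE mulf_neq0.
- by move=> g tg j; rewrite ffunE invr_eq0.
- by [].
Qed.

Lemma inv_v_unique x y : torus x -> mul_v x y = one_v n -> inv_v x = y.
Proof.
move=> tx /ffunP xy; apply/ffunP => j; have := xy j.
by rewrite !ffunE => xyj; rewrite -[y j](mulKf (tx j)) xyj mulr1.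
Qed.

End DiagonalVectors.

Definition bool_of_prop (P : Prop) : bool :=
  if excluded_middle_informative P then true else false.

Lemma bool_of_propP (P : Prop) : reflect P (bool_of_prop P).
Proof. by rewrite /bool_of_prop; case: excluded_middle_informative => h; constructor. Qed.

Lemma cfker_separation (gT : finGroupType) (G H : {group gT}) a :
  (H <| G)%g -> a \notin H -> exists i : Iirr G, H \subset cfker 'chi_i /\ a \notin cfker 'chi_i.
Proof.
move=> H_normal a_notin; apply: NNPP => no_sep; case/negP: a_notin.
rewrite -(cap_cfker_normal H_normal); apply/bigcapP => i H_ker.
by apply: contraT => a_ker; case: no_sep; exists i.
Qed.

Section TorsionDiagonal.
Variables (n N : nat) (z : algC).
Hypothesis z_prim : N.+2.-primitive_root z.

(* The N.+2-torsion of the diagonal torus is the image of ('Z_N.+2)^n; the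
   modulus is written N.+2 because ['Z_m] is a genuine ring only for m > 1. *)
Definition expZ (a : 'rV['Z_N.+2]_n) : dvec n := [ffun j => z ^+ (a 0 j : nat)].

Lemma expZD a b : expZ (a + b) = mul_v (expZ a) (expZ b).
Proof.
apply/ffunP => j; rewrite !ffunE mxE /= -exprD.
by rewrite (expr_mod _ (prim_expr_order z_prim)).
Qed.

Lemma expZ0 : expZ 0 = one_v n.
Proof. by apply/ffunP => j; rewrite !ffunE mxE expr0. Qed.

Lemma expZ_onto (g : dvec n) : (forall j, g j ^+ N.+2 = 1) -> exists a, expZ a = g.
Proof.
move=> g_tors; exists (\row_j (sval (prim_rootP z_prim (g_tors j)) : 'Z_N.+2)).
apply/ffunP => j; rewrite ffunE mxE.
by case: (prim_rootP z_prim (g_tors j)) => i /= ->.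
Qed.

Definition unit_row (j : 'I_n) : 'rV['Z_N.+2]_n := \row_k ((k == j)%:R : 'Z_N.+2).

Lemma row_Zp_decomp (a : 'rV['Z_N.+2]_n) : a = (\prod_j unit_row j ^+ (a 0 j : nat))%g.
Proof.
rewrite -[RHS]/(\sum_j unit_row j *+ (a 0 j : nat)).
apply/rowP => k; rewrite summxE (bigD1 k) //= big1 => [|j jk].
  by rewrite mulmxnE !mxE eqxx addr0 natr_Zp.
by rewrite mulmxnE !mxE eq_sym (negbTE jk) mul0rn.
Qed.

Lemma linear_char_monomial (chi : 'CF([set: 'rV['Z_N.+2]_n]%G)) :
  chi \is a linear_char ->
  exists r : 'I_n -> nat, forall a, chi a = monom (expZ a) r.
Proof.
move=> chi_lin.
have chi_tors j : chi (unit_row j) ^+ N.+2 = 1.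
  rewrite -(lin_charX chi_lin) ?inE //.
  suff -> : ((unit_row j) ^+ N.+2)%g = 1%g by exact: lin_char1.
  have N0 : (N.+2%:R : 'Z_N.+2) = 0 by rewrite Zp_nat; apply: val_inj; rewrite /= modnn.
  by rewrite FinRing.zmodXgE FinRing.zmod1gE -scaler_nat N0 scale0r.
exists (fun j => sval (prim_rootP z_prim (chi_tors j))) => a.
rewrite {1}(row_Zp_decomp a) (lin_char_prod chi_lin) => [|k _]; last by rewrite inE.
apply: eq_bigr => k _; rewrite (lin_charX chi_lin) ?inE // ffunE -exprM mulnC exprM.
by case: (prim_rootP z_prim (chi_tors k)) => i /= <-.
Qed.

Lemma diag_torsion_separation (H : dset n) : is_group H ->
  (forall g, H g -> forall j, g j ^+ N.+2 = 1) ->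
  forall h : dvec n, (forall j, h j ^+ N.+2 = 1) -> ~ H h ->
  exists r : 'I_n -> nat,
    (forall g, H g -> monom g r = 1) /\ monom h r != 1.
Proof.
move=> [H1 HM _ _] H_tors h h_tors h_notin.
pose HZ := [set a : 'rV['Z_N.+2]_n | bool_of_prop (H (expZ a))].
have HZ_group : group_set HZ.
  apply/group_setP; split; first by rewrite inE FinRing.zmod1gE expZ0; exact/bool_of_propP.
  move=> a b; rewrite !inE => /bool_of_propP Ha /bool_of_propP Hb; apply/bool_of_propP.
  by rewrite FinRing.zmodMgE expZD; apply: HM.
have HZ_normal : (Group HZ_group <| [set: 'rV['Z_N.+2]_n])%g.
  by rewrite -sub_abelian_normal ?subsetT // FinRing.zmod_abelian.
have [a0 a0h] := expZ_onto h_tors.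
have a0_notin : a0 \notin Group HZ_group by rewrite inE; apply/bool_of_propP; rewrite a0h.
have [i [HZ_ker a0_ker]] := cfker_separation HZ_normal a0_notin.
have chi_lin : 'chi_i \is a linear_char := char_abelianP _ (FinRing.zmod_abelian _) i.
have [r chiE] := linear_char_monomial chi_lin.
exists r; split.
  move=> g Hg; have [a ag] := expZ_onto (H_tors g Hg).
  have aHZ : a \in Group HZ_group by rewrite inE; apply/bool_of_propP; rewrite ag.
  have := subsetP HZ_ker a aHZ; rewrite cfkerEirr inE => /eqP.
  by rewrite chiE ag lin_char1.
apply: contra a0_ker; rewrite cfkerEirr inE chiE a0h => /eqP ->.
by rewrite lin_char1.
Qed.

End TorsionDiagonal.

Lemma sum_mulr_swap n (a b : 'I_n -> rat) (A : 'I_n -> 'I_n -> rat) :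
  \sum_j a j * \sum_k b k * A j k = \sum_k b k * \sum_j a j * A j k.
Proof.
under eq_bigr => j _ do rewrite mulr_sumr.
rewrite exchange_big /=; apply: eq_bigr => k _; rewrite mulr_sumr.
by apply: eq_bigr => j _; rewrite mulrCA.
Qed.

Lemma exists_common_denominator n (A : 'M[rat]_n) :
  exists2 D : nat, (0 < D)%N & forall i j, D%:R * A i j \is a Num.int.
Proof.
exists (\prod_i \prod_j `|denq (A i j)|)%N.
  by rewrite prodn_gt0 // => i; rewrite prodn_gt0 // => j; exact: absz_denq_gt0.
have dvdn_prod (I : finType) (F : I -> nat) i0 : (F i0 %| \prod_i F i)%N.
  by rewrite (bigD1 i0) //= dvdn_mulr.
move=> i j; have /dvdnP[m ->] := dvdn_trans (dvdn_prod _ _ j)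
  (dvdn_prod _ (fun i => \prod_j `|denq (A i j)|)%N i).
rewrite natrM -mulrA.
have -> : (`|denq (A i j)|%N%:R : rat) * A i j = (numq (A i j))%:~R.
  by rewrite numqE mulrC -denq_absz.
by rewrite rpredM ?natr_int ?intr_int.
Qed.

Lemma exprz_sum (x : algC) (I : Type) (s : seq I) (F : I -> int) : x != 0 ->
  x ^ (\sum_(i <- s) F i) = \prod_(i <- s) x ^ F i.
Proof.
move=> x_neq0; elim: s => [|a s IH]; first by rewrite !big_nil expr0z.
by rewrite !big_cons expfzDr // IH.
Qed.

Lemma prod_exprz (I : Type) (s : seq I) (F : I -> algC) (e : int) :
  (\prod_(i <- s) F i) ^ e = \prod_(i <- s) F i ^ e.
Proof.
elim: s => [|a s IH]; first by rewrite !big_nil exp1rz.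
by rewrite !big_cons expfzMl IH.
Qed.

Definition Minv n (P : 'M[nat]_n) : 'M[rat]_n := invmx (Mrat P).

Section ExponentMatrix.
Variables (n : nat) (P : 'M[nat]_n).
Implicit Types (g h x : dvec n) (q : 'I_n -> rat) (r t : 'I_n -> nat).

(* [colE t] = e^(2 pi i M^-1 t) and [rowE r] = e^(2 pi i r M^-1); the paper's
   rho_k is [rowE] of the k-th unit vector. *)
Definition colE t : dvec n := expv (fun j => \sum_k (t k)%:R * Minv P j k).
Definition rowE r : dvec n := expv (fun j => \sum_k (r k)%:R * Minv P k j).

Lemma colE_rowE_pairing t r : monom (colE t) r = monom (rowE r) t.
Proof. by rewrite /colE /rowE !monom_expv sum_mulr_swap. Qed.

Lemma rowE_mul r r' : mul_v (rowE r) (rowE r') = rowE (fun k => (r k + r' k)%N).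
Proof.
rewrite /rowE expv_mul; congr expv; apply: functional_extensionality => j.
by rewrite -big_split /=; apply: eq_bigr => k _; rewrite natrD mulrDl.
Qed.

Lemma rowE_exp r m : exp_v (rowE r) m = rowE (fun k => (r k * m)%N).
Proof.
rewrite /rowE expv_exp; congr expv; apply: functional_extensionality => j.
rewrite -mulr_natr mulr_suml.
by apply: eq_bigr => k _; rewrite natrM mulrAC.
Qed.

Lemma rowE0 : rowE (fun _ => 0%N) = one_v n.
Proof.
rewrite -expv0 /rowE; congr expv; apply: functional_extensionality => j.
by rewrite big1 // => k _; rewrite mul0r.
Qed.

Lemma rowE_torsion : exists2 D : nat, (0 < D)%N & forall r j, rowE r j ^+ D = 1.
Proof.
have [D D_gt0 D_int] := exists_common_denominator (Minv P).
exists D => // r j; rewrite !ffunE expiMn -mulr_natl.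
have /intrP[z ->] : D%:R * \sum_k (r k)%:R * Minv P k j \is a Num.int.
  by rewrite mulr_sumr rpred_sum // => k _; rewrite mulrCA rpredM ?natr_int.
exact: expi_int.
Qed.

Hypothesis P_inv : invertible_exp P.

Lemma Minv_mulr i j : \sum_k Minv P i k * (P k j)%:R = (i == j)%:R.
Proof.
have := congr1 (fun A : 'M[rat]_n => A i j) (mulVmx P_inv).
by rewrite !mxE => <-; apply: eq_bigr => k _; rewrite mxE.
Qed.

Lemma Minv_mull i j : \sum_k (P i k)%:R * Minv P k j = (i == j)%:R.
Proof.
have := congr1 (fun A : 'M[rat]_n => A i j) (mulmxV P_inv).
by rewrite !mxE => <-; apply: eq_bigr => k _; rewrite mxE.
Qed.

Lemma Minv_mul_vec q j : \sum_k Minv P j k * \sum_l (P k l)%:R * q l = q j.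
Proof.
have col l : \sum_k Minv P j k * ((P k l)%:R * q l) = (j == l)%:R * q l.
  by rewrite -(Minv_mulr j l) mulr_suml; apply: eq_bigr => k _; rewrite mulrA.
under eq_bigr => k _ do rewrite mulr_sumr.
rewrite exchange_big /=; under eq_bigr => l _ do rewrite col.
rewrite (bigD1 j) //= eqxx mul1r big1 ?addr0 // => l lj.
by rewrite eq_sym (negbTE lj) mul0r.
Qed.

Lemma Aut_torus g : Aut P g -> torus g.
Proof.
move=> Ag j; apply/eqP => gj0.
have [i Pij] : exists i, P i j != 0%N.
  apply: NNPP => no_i; have := Minv_mulr j j; rewrite eqxx big1 => [|k _].
    by move/eqP; rewrite eq_sym oner_eq0.
  have -> : P k j = 0%N by apply/eqP; apply: contraT => Pkj; case: no_i; exists k.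
  by rewrite mulr0.
have := Ag i; rewrite (bigD1 j) //= gj0 expr0n (negbTE Pij) mul0r => /eqP.
by rewrite eq_sym oner_eq0.
Qed.

Lemma Aut_torsion : exists2 D : nat, (0 < D)%N & forall g, Aut P g -> forall j, g j ^+ D = 1.
Proof.
have [D D_gt0 D_int] := exists_common_denominator (Minv P).
exists D => // g Ag k.
pose C i := numq (D%:R * Minv P k i).
have CE i : (C i)%:~R = D%:R * Minv P k i by rewrite /C numqK.
(* D * delta_kj = sum_i C_i P_ij, so g_k ^ D is a product of powers of the monomials of W *)
have row_comb j : D%:Z * (k == j)%:Z = \sum_i C i * (P i j)%:Z.
  apply/eqP; rewrite -(eqr_int rat) intrM rmorph_sum /=.
  rewrite -[(D%:Z)%:~R]/(D%:R : rat) -[((k == j)%:Z)%:~R]/((k == j)%:R : rat).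
  rewrite -Minv_mulr mulr_sumr; apply/eqP; apply: eq_bigr => i _.
  by rewrite intrM CE mulrA.
have gkD : g k ^+ D = \prod_j g j ^ (D%:Z * (k == j)%:Z).
  rewrite (bigD1 k) //= eqxx mulr1 big1 ?mulr1 // => j jk.
  by rewrite eq_sym (negbTE jk) mulr0 expr0z.
rewrite gkD; under eq_bigr => j _ do rewrite row_comb (exprz_sum _ _ (Aut_torus Ag j)).
rewrite exchange_big /= big1 // => i _.
under eq_bigr => j _ do rewrite mulrC -exprz_exp -exprnP.
by rewrite -prod_exprz Ag exp1rz.
Qed.

Lemma Aut_expvE g : Aut P g ->
  exists2 q, g = expv q & forall i, \sum_j (P i j)%:R * q j \is a Num.int.
Proof.
move=> Ag; have [D D_gt0 D_tors] := Aut_torsion.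
have /fin_all_exists[k gk] j : exists k : nat, g j = expi (k%:R / D%:R).
  exact/expi_onto_unity_root/D_tors.
exists (fun j => (k j)%:R / D%:R); first by apply/ffunP => j; rewrite ffunE gk.
move=> i; apply: expi_eq1; rewrite -monom_expv -(Ag i).
by apply: eq_bigr => j _; rewrite ffunE gk.
Qed.

Lemma colE_Aut t : Aut P (colE t).
Proof.
move=> i; rewrite -[LHS]/(monom (colE t) (fun j => P i j)) monom_expv sum_mulr_swap.
under eq_bigr => k _ do rewrite Minv_mull.
rewrite (bigD1 i) //= big1 ?eqxx ?mulr1 ?addr0 => [|k ki]; last first.
  by rewrite eq_sym (negbTE ki) mulr0.
by rewrite -[(t i)%:R]/(((t i)%:Z)%:~R : rat) expi_int.
Qed.

Lemma Aut_colE g : Aut P g -> exists t, g = colE t.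
Proof.
move=> Ag; have [q -> q_int] := Aut_expvE Ag.
have [D D_gt0 D_int] := exists_common_denominator (Minv P).
have /fin_all_exists[z qz] i : exists z : int, \sum_j (P i j)%:R * q j = z%:~R.
  exact/intrP.
(* shift the integer vector z by a multiple of D to make it nonnegative *)
pose c := (\sum_i absz (z i))%N.
have z_le i : (absz (z i) <= c)%N by rewrite /c (bigD1 i) //= leq_addr.
pose t i := absz (z i + (c * D)%N%:Z).
have tE i : (t i)%:R = (z i)%:~R + (c * D)%:R :> rat.
  rewrite /t -[((absz _))%:R]/(((absz (z i + (c * D)%N%:Z))%:Z)%:~R : rat).
  rewrite gez0_abs ?intrD //.
  have : ((absz (z i))%:Z <= (c * D)%N%:Z)%R.
    by rewrite lez_nat; apply: leq_trans (z_le i) _; rewrite leq_pmulr.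
  lia.
exists t; apply: expv_eq => j.
under eq_bigr => k _ do rewrite tE mulrDl -qz.
rewrite big_split /=.
have -> : \sum_k (\sum_l (P k l)%:R * q l) * Minv P j k = q j.
  by under eq_bigr => k _ do rewrite mulrC; rewrite Minv_mul_vec.
rewrite opprD addrA subrr add0r rpredN rpred_sum // => k _.
by rewrite natrM -mulrA mulrC rpredM ?natr_int // D_int.
Qed.

End ExponentMatrix.

Lemma Minv_tr n (P : 'M[nat]_n) : Minv P^T = (Minv P)^T.
Proof.
rewrite /Minv.
have -> : Mrat P^T = (Mrat P)^T by apply/matrixP => i j; rewrite !mxE.
by rewrite trmx_inv.
Qed.

Lemma invertible_exp_tr n (P : 'M[nat]_n) : invertible_exp P -> invertible_exp P^T.
Proof.
rewrite /invertible_exp.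
have -> : Mrat P^T = (Mrat P)^T by apply/matrixP => i j; rewrite !mxE.
by rewrite unitmx_tr.
Qed.

Lemma rowE_tr n (P : 'M[nat]_n) r : rowE P^T r = colE P r.
Proof.
rewrite /rowE /colE Minv_tr; congr expv; apply: functional_extensionality => j.
by apply: eq_bigr => k _; rewrite mxE.
Qed.

Lemma colE_tr n (P : 'M[nat]_n) r : colE P^T r = rowE P r.
Proof. by rewrite -rowE_tr trmxK. Qed.

Lemma rowE_Aut_tr n (P : 'M[nat]_n) r : invertible_exp P -> Aut P^T (rowE P r).
Proof. by move=> P_inv; rewrite -colE_tr; apply/colE_Aut/invertible_exp_tr. Qed.

Lemma Aut_tr_rowE n (P : 'M[nat]_n) g : invertible_exp P -> Aut P^T g ->
  exists r, g = rowE P r.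
Proof.
move=> P_inv Ag; have [r ->] := Aut_colE (invertible_exp_tr P_inv) Ag.
by exists r; rewrite colE_tr.
Qed.

Section GeneratedGroups.
Variable n : nat.
Implicit Types (S K : dset n) (r : 'I_n -> nat).

Lemma gen_sub S : subset_v S (gen_by S).
Proof. by move=> x Sx K _; apply. Qed.

Lemma gen_min S K : is_group K -> subset_v S K -> subset_v (gen_by S) K.
Proof. by move=> K_group SK x /(_ K K_group SK). Qed.

Lemma gen_group S : subset_v S (@torus n) -> is_group (gen_by S).
Proof.
move=> S_torus; split.
- by move=> K [].
- by move=> g h Sg Sh K K_group SK; case: (K_group) => _ KM _ _; apply: KM; [apply: Sg|apply: Sh].
- by move=> g Sg K K_group SK; case: (K_group) => _ _ KV _; apply: KV; apply: Sg.
- by move=> g Sg; apply: (Sg _ (torus_group n) S_torus).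
Qed.

Lemma annihilator_group r : is_group (fun h : dvec n => torus h /\ monom h r = 1).
Proof.
have [T1 TM TV _] := torus_group n.
split.
- by split; [exact: T1 | rewrite monom_one].
- by move=> g h [tg mg] [th mh]; split; [exact: TM | rewrite monom_mul mg mh mulr1].
- by move=> g [tg mg]; split; [exact: TV | rewrite monom_inv mg invr1].
- by move=> g [].
Qed.

Lemma annihilator_gen S r : subset_v S (@torus n) ->
  (forall h, S h -> monom h r = 1) -> forall h, gen_by S h -> monom h r = 1.
Proof.
move=> S_torus S_ann h Sh.
by case: (gen_min (annihilator_group r) (fun x Sx => conj (S_torus x Sx) (S_ann x Sx)) Sh).
Qed.

End GeneratedGroups.

Section BHDuality.
Variables (n : nat) (P : 'M[nat]_n).
Implicit Types (A B H S : dset n) (r : 'I_n -> nat).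

Lemma BHdualE H g :
  BHdual P H g <-> exists r, (forall h, H h -> monom h r = 1) /\ g = rowE P r.
Proof.
have rhoE r : [ffun j => \prod_k rho P k j ^+ r k] = rowE P r.
  apply/ffunP => j; rewrite !ffunE expi_sum; apply: eq_bigr => k _.
  by rewrite ffunE expiMn mulr_natl.
by split=> -[r [H_ann ->]]; exists r; split; rewrite ?rhoE.
Qed.

Lemma BHdual_gen S : subset_v S (@torus n) -> eqset_v (BHdual P (gen_by S)) (BHdual P S).
Proof.
move=> S_torus g; rewrite !BHdualE; split=> -[r [r_ann ->]]; exists r; split => //.
  by move=> h Sh; apply: r_ann; apply: gen_sub.
exact: annihilator_gen.
Qed.

Lemma BHdual_anti A B : subset_v A B -> subset_v (BHdual P B) (BHdual P A).
Proof.
move=> AB g; rewrite !BHdualE => -[r [r_ann ->]]; exists r; split => //.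
by move=> h /AB; apply: r_ann.
Qed.

Lemma BHdual_eq A B : eqset_v A B -> eqset_v (BHdual P A) (BHdual P B).
Proof. by move=> AB g; split; apply: BHdual_anti => x /AB. Qed.

Lemma BHdual_group H : is_group (BHdual P H).
Proof.
have [D D_gt0 D_tors] := rowE_torsion P.
split.
- apply/BHdualE; exists (fun _ => 0%N); split; last by rewrite rowE0.
  by move=> h _; rewrite /monom big1 // => k _; rewrite expr0.
- move=> g h /BHdualE[r [r_ann ->]] /BHdualE[r' [r'_ann ->]].
  apply/BHdualE; exists (fun k => (r k + r' k)%N); split; last by rewrite rowE_mul.
  by move=> x Hx; rewrite monomD r_ann ?r'_ann ?mulr1.
- move=> g /BHdualE[r [r_ann ->]].
  (* the inverse of rowE r is rowE ((D - 1) r) *)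
  apply/BHdualE; exists (fun k => (r k * D.-1)%N); split.
    by move=> x Hx; rewrite monomM r_ann ?expr1n.
  apply: inv_v_unique; first exact: expv_torus.
  rewrite rowE_mul.
  have -> : rowE P (fun k => (r k + r k * D.-1)%N) = exp_v (rowE P r) D.
    rewrite rowE_exp; congr rowE; apply: functional_extensionality => k.
    by rewrite -{1}(muln1 (r k)) -mulnDr add1n prednK.
  by apply/ffunP => j; have := D_tors r j; rewrite !ffunE.
- by move=> g /BHdualE[r [_ ->]]; exact: expv_torus.
Qed.

End BHDuality.

Lemma BHdualK n (P : 'M[nat]_n) (H : dset n) : invertible_exp P -> is_group H ->
  subset_v H (Aut P) -> eqset_v (BHdual P^T (BHdual P H)) H.
Proof.
move=> P_inv H_group H_Aut g; split.
  move=> /BHdualE[t [t_ann ->]]; rewrite rowE_tr.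
  apply: NNPP => t_notin.
  have [D D_gt0 D_tors] := Aut_torsion P_inv.
  (* Aut_W has exponent D, hence also 2 D, which is of the form N.+2 *)
  have D2 : (2 * D = (2 * D - 2).+2)%N by lia.
  have tors x : Aut P x -> forall j, x j ^+ (2 * D - 2).+2 = 1.
    by move=> Ax j; rewrite -D2 mulnC exprM D_tors // expr1n.
  have [r [r_ann r_sep]] := diag_torsion_separation
    (svalP (C_prim_root_exists (ltn0Sn _))) H_group (fun x Hx => tors x (H_Aut x Hx))
    (tors _ (colE_Aut P_inv t)) t_notin.
  have : monom (rowE P r) t = 1 by apply: t_ann; apply/BHdualE; exists r; split.
  by rewrite -colE_rowE_pairing => r_t; move: r_sep; rewrite r_t eqxx.
move=> Hg; have [t gt] := Aut_colE P_inv (H_Aut g Hg).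
apply/BHdualE; exists t; split; last by rewrite rowE_tr.
move=> y /BHdualE[r [r_ann ->]]; rewrite -colE_rowE_pairing -gt.
exact: r_ann.
Qed.

(** * Groups between <J_W^2> and SL_W *)

Definition ones {n} : 'I_n -> nat := fun _ => 1%N.

Lemma monom_ones n (h : dvec n) : monom h ones = \prod_j h j.
Proof. by apply: eq_bigr => j _; rewrite expr1. Qed.

Lemma Aut_group n (P : 'M[nat]_n) : invertible_exp P -> is_group (Aut P).
Proof.
move=> P_inv; split.
- by move=> i; rewrite big1 // => j _; rewrite ffunE expr1n.
- move=> g h Ag Ah i; rewrite -[LHS]/(monom (mul_v g h) (fun j => P i j)).
  by rewrite monom_mul [monom g _]Ag [monom h _]Ah mulr1.
- move=> g Ag i; rewrite -[LHS]/(monom (inv_v g) (fun j => P i j)).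
  by rewrite monom_inv [monom g _]Ag invr1.
- by move=> g; exact: Aut_torus.
Qed.

Lemma J_colE n (P : 'M[nat]_n) w d : invertible_exp P -> quasi_hom P w d ->
  J w d = colE P ones.
Proof.
move=> P_inv [d_gt0 [_ P_qh]]; apply/ffunP => j; rewrite !ffunE; congr expi.
rewrite -(Minv_mul_vec P_inv (fun l => (w l)%:R / d%:R)); apply: eq_bigr => k _.
rewrite [RHS]mulrC; congr (_ * _).
under eq_bigr => l _ do rewrite mulrA -natrM.
by rewrite -mulr_suml -natr_sum P_qh divff // pnatr_eq0 -lt0n.
Qed.

(* this is where the hypothesis 2 * sum_j w_j = d enters *)
Lemma J_det n (w : 'I_n -> nat) d : (0 < d)%N -> (2 * \sum_j w j = d)%N ->
  \prod_j J w d j = -1.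
Proof.
move=> d_gt0 half_sum.
have -> : \prod_j J w d j = expi (\sum_j (w j)%:R / d%:R).
  by rewrite expi_sum; apply: eq_bigr => j _; rewrite ffunE.
have -> : \sum_j (w j)%:R / d%:R = 1%:~R / 2%:R :> rat.
  have sum_neq0 : (\sum_j w j)%:R != 0 :> rat.
    by rewrite pnatr_eq0 -lt0n; move: d_gt0; rewrite -half_sum; lia.
  by rewrite -mulr_suml -natr_sum -half_sum natrM invfM mulrCA mulfV // mulr1 div1r.
by rewrite expi_divE // mulr1 -exprnP rootN1K.
Qed.

Definition SLpm n (P : 'M[nat]_n) : dset n := fun h => Aut P h /\ (\prod_j h j) ^+ 2 = 1.

Lemma SLpm_group n (P : 'M[nat]_n) : invertible_exp P -> is_group (SLpm P).
Proof.
move=> P_inv; have [A1 AM AV A_torus] := Aut_group P_inv.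
split.
- by split; [exact: A1 | rewrite -monom_ones monom_one expr1n].
- move=> g h [Ag dg] [Ah dh]; split; first exact: AM.
  by rewrite -monom_ones monom_mul exprMn !monom_ones dg dh mulr1.
- move=> g [Ag dg]; split; first exact: AV.
  by rewrite -monom_ones monom_inv exprVn monom_ones dg invr1.
- by move=> g [Ag _]; exact: A_torus.
Qed.

Definition adjoin n (G : dset n) (j : dvec n) : dset n := fun x => G x \/ x = j.

Lemma adjoin_torus n (G : dset n) j : subset_v G (@torus n) -> torus j ->
  subset_v (adjoin G j) (@torus n).
Proof. by move=> G_torus j_torus x [/G_torus|->]. Qed.

Lemma gen_adjoin_sqrt n (G : dset n) j : is_group G -> G (exp_v j 2) -> torus j ->
  forall x, gen_by (adjoin G j) x -> G x \/ G (mul_v x (inv_v j)).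
Proof.
move=> [G1 GM GV G_torus] Gj2 j_torus.
pose Gj (x : dvec n) := G (mul_v x (inv_v j)).
have Gj_inv x : torus x -> Gj x -> G (mul_v (inv_v x) (inv_v j)).
  move=> x_torus Gjx; have -> : mul_v (inv_v x) (inv_v j) =
      mul_v (inv_v (mul_v x (inv_v j))) (inv_v (exp_v j 2)).
    apply/ffunP => k; have := j_torus k; have := x_torus k; rewrite !ffunE => xk jk.
    by field; rewrite jk xk.
  by apply: GM; apply: GV.
apply: gen_min; last first.
  move=> x [Gx|->]; [by left | right].
  have -> : mul_v j (inv_v j) = one_v n.
    by apply/ffunP => k; have := j_torus k; rewrite !ffunE => jk; rewrite mulfV.
  exact: G1.
split.
- by left.
- move=> x y [Gx|Gjx] [Gy|Gjy].
  + by left; apply: GM.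
  + right; have -> : mul_v (mul_v x y) (inv_v j) = mul_v x (mul_v y (inv_v j)).
      by apply/ffunP => k; rewrite !ffunE mulrA.
    exact: GM.
  + right; have -> : mul_v (mul_v x y) (inv_v j) = mul_v (mul_v x (inv_v j)) y.
      by apply/ffunP => k; rewrite !ffunE mulrAC.
    exact: GM.
  + left; have -> : mul_v x y =
        mul_v (mul_v (mul_v x (inv_v j)) (mul_v y (inv_v j))) (exp_v j 2).
      by apply/ffunP => k; have := j_torus k; rewrite !ffunE => jk; field.
    by apply: (GM) => //; apply: (GM).
- move=> x [Gx|Gjx]; first by left; apply: GV.
  right; apply: Gj_inv => //.
  by move=> k; have := G_torus _ Gjx k; rewrite !ffunE mulf_eq0 negb_or => /andP[].
- move=> x [Gx|Gjx] k; first exact: G_torus.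
  by have := G_torus _ Gjx k; rewrite ffunE; apply: contra => /eqP ->; rewrite mul0r.
Qed.

Section TransposeGroups.
Variables (n : nat) (M : 'M[nat]_n) (w w' : 'I_n -> nat) (d d' : nat).
Hypotheses (M_inv : invertible_exp M) (M_qh : quasi_hom M w d).
Hypotheses (half_sum : (2 * \sum_j w j = d)%N) (MT_qh : quasi_hom M^T w' d').

Let JW := J w d.
Let JWT := J w' d'.

Let JW_colE : JW = colE M ones. Proof. exact: J_colE. Qed.

Let JWT_rowE : JWT = rowE M ones.
Proof. by rewrite /JWT (J_colE (invertible_exp_tr M_inv) MT_qh) colE_tr. Qed.

Let JW_torus : torus JW. Proof. by rewrite JW_colE; exact: expv_torus. Qed.

Let JW_det : \prod_j JW j = -1. Proof. by case: M_qh => d_gt0 _; exact: J_det. Qed.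

Lemma monom_JW r : monom JW r = \prod_j rowE M r j.
Proof. by rewrite JW_colE colE_rowE_pairing monom_ones. Qed.

Lemma starE G : subset_v G (@torus n) -> forall g,
  star M w d G g <-> exists r, (forall h, G h -> monom h r = 1) /\
                               \prod_j rowE M r j = 1 /\ g = rowE M r.
Proof.
move=> G_torus g; rewrite /star (BHdual_gen M (adjoin_torus G_torus JW_torus)) BHdualE.
split=> [[r [r_ann ->]]|[r [G_ann [det1 ->]]]]; exists r.
  split; first by move=> h Gh; apply: r_ann; left.
  by rewrite -monom_JW; split=> //; apply: r_ann; right.
by split=> // h [/G_ann|->] //; rewrite monom_JW.
Qed.

Lemma star_admissible G : admissible M w d G -> admissible M^T w' d' (star M w d G).
Proof.
move=> [G_group G_SL GJ2]; have G_torus : subset_v G (@torus n) by case: G_group.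
split; first exact: BHdual_group.
  by move=> g /(starE G_torus)[r [_ [det1 ->]]]; split; [exact: rowE_Aut_tr | rewrite det1].
apply/(starE G_torus); exists (fun k => (ones k * 2)%N); split; last split.
- by move=> h Gh; rewrite monomM monom_ones (G_SL h Gh).2 expr1n.
- by rewrite -monom_JW monomM monom_ones JW_det sqrrN expr1n.
- by rewrite -/JWT JWT_rowE rowE_exp.
Qed.

Lemma star_J2 : eqset_v (star M w d (gen_by (fun x => x = exp_v JW 2))) (SL M^T).
Proof.
have J2_torus : subset_v (fun x => x = exp_v JW 2) (@torus n).
  by move=> x ->; rewrite JW_colE /colE expv_exp; exact: expv_torus.
have gen_torus := gen_min (torus_group n) J2_torus.
move=> g; rewrite (starE gen_torus); split.
  by move=> [r [_ [det1 ->]]]; split; [exact: rowE_Aut_tr | rewrite det1].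
move=> [Ag det1]; have [r gr] := Aut_tr_rowE M_inv Ag.
exists r; split; last by rewrite -gr.
apply: annihilator_gen => // y ->.
by rewrite monom_exp monom_JW -gr det1 expr1n.
Qed.

Let JWT2_rowE : exp_v JWT 2 = rowE M (fun k => (ones k * 2)%N).
Proof. by rewrite JWT_rowE rowE_exp. Qed.

Let JWT2_torus : subset_v (fun x => x = exp_v JWT 2) (@torus n).
Proof. by move=> x ->; rewrite JWT2_rowE; exact: expv_torus. Qed.

Lemma gen_SL_JW : eqset_v (gen_by (adjoin (SL M) JW)) (SLpm M).
Proof.
have [_ AM AV A_torus] := Aut_group M_inv.
have JW_Aut : Aut M JW by rewrite JW_colE; exact: colE_Aut.
move=> h; split.
  apply: gen_min => [|x [[Ax dx]|->]]; first exact: SLpm_group.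
    by split => //; rewrite dx expr1n.
  by split => //; rewrite JW_det sqrrN expr1n.
move=> [Ah]; move/eqP; rewrite sqrf_eq1 => /orP[/eqP dh|/eqP dh].
  by apply: gen_sub; left.
have SL_torus : subset_v (SL M) (@torus n) by move=> x [Ax _]; exact: A_torus.
have [_ gM _ _] := gen_group (adjoin_torus SL_torus JW_torus).
have -> : h = mul_v (mul_v h (inv_v JW)) JW.
  by apply/ffunP => j; rewrite !ffunE mulfVK //; have := JW_torus j; rewrite ffunE.
apply: gM; apply: gen_sub; [left | by right].
split; first by apply: AM => //; apply: AV.
by rewrite -monom_ones monom_mul monom_inv !monom_ones dh JW_det invrN invr1 mulrNN mulr1.
Qed.

Lemma SLpm_BHdual : eqset_v (SLpm M) (BHdual M^T (gen_by (fun x => x = exp_v JWT 2))).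
Proof.
move=> h; rewrite BHdualE; split.
  move=> [Ah dh]; have [t ht] := Aut_colE M_inv Ah.
  exists t; split; last by rewrite rowE_tr.
  apply: annihilator_gen => // y ->.
  by rewrite JWT2_rowE -colE_rowE_pairing -ht monomM monom_ones.
move=> [t [t_ann ->]]; rewrite rowE_tr; split; first exact: colE_Aut.
rewrite -monom_ones -monomM colE_rowE_pairing -JWT2_rowE.
by apply: t_ann; apply: gen_sub.
Qed.

Lemma star_SL : eqset_v (star M w d (SL M)) (gen_by (fun x => x = exp_v JWT 2)).
Proof.
have X_Aut : subset_v (gen_by (fun x => x = exp_v JWT 2)) (Aut M^T).
  apply: gen_min; first exact/Aut_group/invertible_exp_tr.
  by move=> x ->; rewrite JWT2_rowE; exact: rowE_Aut_tr.
move=> g; rewrite /star (BHdual_eq M gen_SL_JW g) (BHdual_eq M SLpm_BHdual g).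
have := BHdualK (invertible_exp_tr M_inv) (gen_group JWT2_torus) X_Aut g.
by rewrite trmxK.
Qed.

Lemma starK G : admissible M w d G -> eqset_v (star M^T w' d' (star M w d G)) G.
Proof.
move=> [G_group G_SL GJ2]; have G_torus : subset_v G (@torus n) by case: G_group.
have JG_Aut : subset_v (gen_by (adjoin G JW)) (Aut M).
  apply: gen_min; first exact: Aut_group.
  by move=> x [/G_SL[]//|->]; rewrite JW_colE; exact: colE_Aut.
have dualK := BHdualK M_inv (gen_group (adjoin_torus G_torus JW_torus)) JG_Aut.
have starG_torus : subset_v (star M w d G) (@torus n).
  by case: (BHdual_group M (gen_by (adjoin G JW))).
have JWT_torus : torus JWT by rewrite JWT_rowE; exact: expv_torus.
move=> h; rewrite /star (BHdual_gen M^T (adjoin_torus starG_torus JWT_torus) h) BHdualE.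
split=> [[t [t_ann ->]]|Gh]; rewrite ?rowE_tr.
  have det1 : \prod_j colE M t j = 1.
    by rewrite -monom_ones colE_rowE_pairing -JWT_rowE; apply: t_ann; right.
  have JG_t : gen_by (adjoin G JW) (colE M t).
    apply/dualK/BHdualE; exists t; split; last by rewrite rowE_tr.
    by move=> y starGy; apply: t_ann; left.
  (* colE t cannot lie in the coset G JW, which consists of elements of determinant -1 *)
  case: (gen_adjoin_sqrt G_group GJ2 JW_torus JG_t) => // G_tJ.
  have := (G_SL _ G_tJ).2; rewrite -monom_ones monom_mul monom_inv !monom_ones det1 JW_det.
  by rewrite invrN invr1 mul1r => /eqP; rewrite (negbTE oppC1_neq1).
have /dualK/BHdualE[t [t_ann ht]] : gen_by (adjoin G JW) h by apply: gen_sub; left.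
rewrite rowE_tr in ht; exists t; split; last by rewrite rowE_tr.
move=> x [/t_ann//|->].
by rewrite JWT_rowE -colE_rowE_pairing -ht monom_ones (G_SL h Gh).2.
Qed.

End TransposeGroups.

Lemma star_anti n (M : 'M[nat]_n) w d (H1 H2 : dset n) :
  subset_v H1 H2 -> subset_v (star M w d H2) (star M w d H1).
Proof.
move=> H12; apply: BHdual_anti => x H2x K K_group sub.
by apply: H2x => // y [H1y|->]; apply: sub; [left; exact: H12 | right].
Qed.

Unset Implicit Arguments.
Set Strict Implicit.

Theorem proposition4p3 (n : nat) (M : 'M[nat]_n)
  (w : 'I_n -> nat) (d : nat) (w' : 'I_n -> nat) (d' : nat) :
  invertible_exp M ->
  quasi_hom M w d ->
  non_degenerate M ->
  (2 * \sum_(j < n) w j = d)%N ->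
  (* w', d' : weights and degree of the transpose W^* (exponent matrix M^T) *)
  quasi_hom M^T w' d' ->
  [/\ (forall G, admissible M w d G -> admissible M^T w' d' (star M w d G)),
      (forall G, admissible M w d G ->
         eqset_v (star M^T w' d' (star M w d G)) G),
      eqset_v (star M w d (gen_by (fun x => x = exp_v (J w d) 2))) (SL M^T),
      eqset_v (star M w d (SL M)) (gen_by (fun x => x = exp_v (J w' d') 2)) &
      (forall H1 H2, admissible M w d H1 -> admissible M w d H2 ->
         subset_v H1 H2 -> subset_v (star M w d H2) (star M w d H1))].
Proof.
move=> M_inv M_qh _ half_sum MT_qh; split.
- exact: star_admissible.
- exact: starK.
- exact: star_J2.
- exact: star_SL.
- by move=> H1 H2 _ _; exact: star_anti.
Qed.
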